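(* Let $M$, $h_r$, $a_r=h_r(0)$ be as described, and define $K_r(u)=e^{-a_r/n}\big(h_r(u)-a_r\big)$ for $u\in[0,r)$. Then $K_r$ solves $K_r''(K_r')^{n-1}=\exp\big(e^{a_r/n}K_r\big)\mathcal D_M(u)$ on $[0,r)$ with $K_r\to\infty$ as $u\to r$ (so it is a Kähler potential of the complete Kähler–Einstein metric of Ricci curvature $-e^{a_r/n}$ on $T^rM$), $K_r\ge0$, and as $r\to\infty$ the family $\{K_r\}$ converges uniformly on compact subsets of $[0,\infty)$ to a continuous function $K$.
   Context: $M$ is $\mathbb R^n$ or a compact rank-one symmetric space of real dimension $n\ge2$; $u=\sqrt\rho$, $\rho(x,v)=4|v|^2$ on $TM$ with the adapted complex structure; $T^rM=\{|v|<r/2\}$. $\mathcal D_M(u)=u^{n-1}$ for $\mathbb R^n$; $(\sinh u)^{n-1}$ for the round sphere and real projective space; $2^{n-1}(\cosh\frac u2)^k(\sinh\frac u2)^{n-1}$, $k=1,3,7$, for complex projective space, quaternionic projective space, Cayley plane. For $r>0$, $h_r$ is the unique solution, real-analytic in $u^2$, of $h_r''(h_r')^{n-1}=e^{h_r}\mathcal D_M(u)$ on $[0,r)$ with $\lim_{u\to r}h_r=\infty$. *)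

From Stdlib Require Import Reals Lra.
Open Scope R_scope.

Inductive model_space : Type :=
  | Euclid | Sphere | RealProj | CxProj | QuatProj | CayleyPlane.

Definition valid_dim (M : model_space) (n : nat) : Prop :=
  match M with
  | Euclid | Sphere | RealProj => (2 <= n)%nat
  | CxProj => (2 <= n)%nat /\ Nat.Even n
  | QuatProj => (4 <= n)%nat /\ exists m, n = (4 * m)%nat
  | CayleyPlane => n = 16%nat
  end.

Definition DM (M : model_space) (n : nat) (u : R) : R :=
  match M with
  | Euclid => u ^ (n - 1)
  | Sphere | RealProj => (sinh u) ^ (n - 1)
  | CxProj => 2 ^ (n - 1) * (cosh (u / 2)) ^ 1 * (sinh (u / 2)) ^ (n - 1)
  | QuatProj => 2 ^ (n - 1) * (cosh (u / 2)) ^ 3 * (sinh (u / 2)) ^ (n - 1)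
  | CayleyPlane => 2 ^ (n - 1) * (cosh (u / 2)) ^ 7 * (sinh (u / 2)) ^ (n - 1)
  end.

Definition analytic_on (g : R -> R) (a b : R) : Prop :=
  forall x0, a < x0 < b ->
    exists (c : nat -> R) (d : R), 0 < d /\
      forall x, Rabs (x - x0) < d ->
        infinite_sum (fun k => c k * (x - x0) ^ k) (g x).

Definition analytic_in_u2 (r : R) (f : R -> R) : Prop :=
  exists (g : R -> R) (eps : R), 0 < eps /\ analytic_on g (- eps) (r ^ 2) /\
    forall u, - r < u < r -> f u = g (u ^ 2).

Definition solves_ode (M : model_space) (n : nat) (c r : R) (f : R -> R) : Prop :=
  exists f1 f2 : R -> R,
    (forall u, - r < u < r ->
        derivable_pt_lim f u (f1 u) /\ derivable_pt_lim f1 u (f2 u)) /\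
    (forall u, 0 <= u < r ->
        f2 u * (f1 u) ^ (n - 1) = exp (c * f u) * DM M n u).

Definition blows_up_at (r : R) (f : R -> R) : Prop :=
  forall B : R, exists d, 0 < d /\ forall u, r - d < u < r -> B < f u.

Definition is_h (M : model_space) (n : nat) (r : R) (f : R -> R) : Prop :=
  analytic_in_u2 r f /\ solves_ode M n 1 r f /\ blows_up_at r f.

Definition Kfun (n : nat) (hr : R -> R) (u : R) : R :=
  exp (- (hr 0) / INR n) * (hr u - hr 0).

From Stdlib Require Import Reals Ranalysis5 Lra Lia.
Open Scope R_scope.

(* Everything comes from integrating the equation in the form ((h_r')^n)' = n e^(h_r) D_M.
   The solution h_r is even with h_r' > 0 on (0, r), so h_r is nondecreasing, K_r >= 0, and
   multiplying the equation by e^(-a_r) gives the equation of K_r with constant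
   c_r = e^(a_r/n).
   A lower bound a_r >= -L forces r <= radius_bound L: past a fixed point h_r' grows like
   e^(h_r/(n+1)), so e^(-h_r/(n+1)) decreases at a definite rate and would reach 0 in finite
   time.  Hence c_r -> 0 as r -> oo.
   On [0, A], ((K_r')^n)' = n e^(h_r - a_r) D_M gives K_r' <= N e^(h_r - a_r), hence
   e^(h_r - a_r) <= 1 + O(c_r); comparing ((K_r')^n)' for two radii gives
   K_r <= e^(h_r(A) - a_r) K_s.  So |K_r - K_s| = O(c_r + c_s) uniformly on [0, A], and the
   uniform limit of the continuous K_r is continuous. *)

Lemma derivable_pt_lim_val f x l l' :
  derivable_pt_lim f x l -> l = l' -> derivable_pt_lim f x l'.
Proof. now intros H <-. Qed.

Lemma derivable_pt_lim_comp_fun f g x l1 l2 :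
  derivable_pt_lim f x l1 -> derivable_pt_lim g (f x) l2 ->
  derivable_pt_lim (fun y => g (f y)) x (l2 * l1).
Proof. intros; now apply (derivable_pt_lim_comp f g). Qed.

Lemma derivable_pt_lim_pow_fun f x l m : derivable_pt_lim f x l ->
  derivable_pt_lim (fun y => f y ^ m) x (INR m * f x ^ pred m * l).
Proof.
  intros; apply (derivable_pt_lim_comp_fun f (fun y => y ^ m)); auto.
  apply derivable_pt_lim_pow.
Qed.

Lemma derivable_pt_lim_exp_fun f x l : derivable_pt_lim f x l ->
  derivable_pt_lim (fun y => exp (f y)) x (exp (f x) * l).
Proof.
  intros; apply (derivable_pt_lim_comp_fun f exp); auto.
  apply derivable_pt_lim_exp.
Qed.

Lemma derivable_pt_lim_scal_fun a f x l : derivable_pt_lim f x l ->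
  derivable_pt_lim (fun y => a * f y) x (a * l).
Proof. intros; now apply (derivable_pt_lim_scal f a x l). Qed.

Lemma derivable_pt_lim_plus_const_fun f b x l : derivable_pt_lim f x l ->
  derivable_pt_lim (fun y => f y + b) x l.
Proof.
  intros; apply (derivable_pt_lim_val _ _ (l + 0)); [|ring].
  apply (derivable_pt_lim_plus f (fct_cte b)); auto.
  apply derivable_pt_lim_const.
Qed.

Lemma derivable_pt_lim_minus_fun f g x l1 l2 :
  derivable_pt_lim f x l1 -> derivable_pt_lim g x l2 ->
  derivable_pt_lim (fun y => f y - g y) x (l1 - l2).
Proof. intros; now apply derivable_pt_lim_minus. Qed.

Lemma derivable_pt_lim_even_0 f r l : 0 < r ->
  (forall u, - r < u < r -> f (- u) = f u) ->
  derivable_pt_lim f 0 l -> l = 0.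
Proof.
  intros Hr Heven Hd.
  assert (Hd_opp : derivable_pt_lim (fun u => f (- u)) 0 (l * - 1)).
  { apply derivable_pt_lim_comp_fun.
    - apply (derivable_pt_lim_val _ _ (- 1)); [|ring].
      apply (derivable_pt_lim_opp id), derivable_pt_lim_id.
    - now rewrite Ropp_0. }
  apply (derivable_pt_lim_locally_ext _ f 0 (- r) r) in Hd_opp; [|lra|exact Heven].
  pose proof (uniqueness_limite _ _ _ _ Hd Hd_opp); lra.
Qed.

Lemma incr_le_of_deriv_le f f' a b m : a <= b ->
  (forall c, a <= c <= b -> derivable_pt_lim f c (f' c)) ->
  (forall c, a < c < b -> f' c <= m) -> f b - f a <= m * (b - a).
Proof.
  intros Hab Hd Hm. destruct (Req_dec a b) as [->|Hne]; [lra|].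
  destruct (MVT_cor2 f f' a b) as [c [-> Hc]]; [lra|auto|].
  apply Rmult_le_compat_r; [lra|auto].
Qed.

Lemma incr_le_of_deriv_le_deriv f f' g g' a b : a <= b ->
  (forall c, a <= c <= b -> derivable_pt_lim f c (f' c)) ->
  (forall c, a <= c <= b -> derivable_pt_lim g c (g' c)) ->
  (forall c, a < c < b -> f' c <= g' c) -> f b - f a <= g b - g a.
Proof.
  intros Hab Hf Hg Hfg.
  enough (f b - g b - (f a - g a) <= 0 * (b - a)) by lra.
  apply (incr_le_of_deriv_le (fun y => f y - g y) (fun y => f' y - g' y)); auto.
  - intros c Hc; apply derivable_pt_lim_minus_fun; auto.
  - intros c Hc; specialize (Hfg c Hc); lra.
Qed.

Lemma incr_ge_of_deriv_ge f f' a b m : a <= b ->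
  (forall c, a <= c <= b -> derivable_pt_lim f c (f' c)) ->
  (forall c, a < c < b -> m <= f' c) -> m * (b - a) <= f b - f a.
Proof.
  intros Hab Hd Hm.
  enough (m * b - m * a <= f b - f a) by lra.
  apply (incr_le_of_deriv_le_deriv (fun y => m * y) (fun _ => m) f f'); auto.
  intros; apply (derivable_pt_lim_val _ _ (m * 1)); [|ring].
  apply derivable_pt_lim_scal_fun, derivable_pt_lim_id.
Qed.

Lemma exp_le_compat x y : x <= y -> exp x <= exp y.
Proof. intros [H| ->]; [left; now apply exp_increasing|lra]. Qed.

Lemma exp_opp_mul x : exp (- x) * exp x = 1.
Proof. rewrite <- exp_plus, Rplus_opp_l; apply exp_0. Qed.

Lemma exp_pow x m : exp x ^ m = exp (INR m * x).
Proof.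
  induction m as [|m IH]; simpl pow.
  - now rewrite Rmult_0_l, exp_0.
  - rewrite IH, <- exp_plus, S_INR; f_equal; ring.
Qed.

Lemma pow_lt_compat x y m : 0 <= x < y -> (1 <= m)%nat -> x ^ m < y ^ m.
Proof.
  intros Hxy Hm; induction m as [|[|m] IH]; [lia|simpl; lra|].
  assert (x ^ S m < y ^ S m) by (apply IH; lia).
  assert (0 <= x ^ S m) by (apply pow_le; lra).
  change (x * x ^ S m < y * y ^ S m); nra.
Qed.

Lemma pow_le_reg x y m : 0 <= x -> 0 <= y -> (1 <= m)%nat -> x ^ m <= y ^ m -> x <= y.
Proof.
  intros Hx Hy Hm H; destruct (Rle_lt_dec x y) as [|Hlt]; auto.
  assert (y ^ m < x ^ m) by (apply pow_lt_compat; auto; lra); lra.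
Qed.

Lemma le_pow_self x m : 1 <= x -> (1 <= m)%nat -> x <= x ^ m.
Proof. intros; rewrite <- (pow_1 x) at 1; now apply Rle_pow. Qed.

Lemma Rmin_1_le_of_le_pow x m k : 0 <= x -> (1 <= m)%nat -> k <= x ^ m -> Rmin 1 k <= x.
Proof.
  intros Hx Hm Hk; pose proof (Rmin_l 1 k); pose proof (Rmin_r 1 k).
  destruct (Rle_lt_dec 1 x); [lra|].
  replace m with (S (m - 1)) in Hk by lia; simpl in Hk.
  assert (x ^ (m - 1) <= 1) by (rewrite <- (pow1 (m - 1)); apply pow_incr; lra).
  assert (0 <= x ^ (m - 1)) by (apply pow_le; lra).
  nra.
Qed.

Lemma continuity_pt_eps f u : continuity_pt f u -> forall eps, 0 < eps ->
  exists d, 0 < d /\ forall v, Rabs (v - u) < d -> Rabs (f v - f u) < eps.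
Proof.
  intros Hf eps Heps; destruct (Hf eps Heps) as [d [Hd Hnear]].
  exists d; split; auto; intros v Hv.
  destruct (Req_dec u v) as [->|Hne].
  - unfold Rminus; rewrite Rplus_opp_r, Rabs_R0; auto.
  - apply (Hnear v); split; [split; [exact I|auto]|exact Hv].
Qed.

Lemma INR_S_eventually_gt R0 : exists N, forall m, (N <= m)%nat -> R0 < INR m + 1.
Proof.
  destruct (INR_archimed 1 R0) as [N HN]; [lra|].
  exists N; intros m Hm; apply le_INR in Hm; lra.
Qed.

Lemma uniformly_cauchy_limit (F : R -> R -> R) :
  (forall A eps, 0 < A -> 0 < eps -> exists R0, forall r s, R0 < r -> R0 < s ->
     forall u, 0 <= u <= A -> Rabs (F r u - F s u) < eps) ->
  exists K : R -> R, forall A eps, 0 <= A -> 0 < eps ->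
    exists R0, forall r, R0 < r -> forall u, 0 <= u <= A -> Rabs (F r u - K u) < eps.
Proof.
  intros Hcauchy.
  assert (Hseq : forall u, 0 <= u -> Cauchy_crit (fun m => F (INR m + 1) u)).
  { intros u Hu eps Heps; destruct (Hcauchy (u + 1) eps ltac:(lra) Heps) as [R0 HR0].
    destruct (INR_S_eventually_gt R0) as [N HN].
    exists N; intros p q Hp Hq; unfold Rdist.
    apply HR0; [apply HN; lia|apply HN; lia|lra]. }
  set (K := fun u => match Rle_dec 0 u with
                     | left Hu => proj1_sig (R_complete _ (Hseq u Hu))
                     | right _ => 0 end).
  assert (HK : forall u, 0 <= u -> Un_cv (fun m => F (INR m + 1) u) (K u)).
  { intros u Hu; unfold K; destruct (Rle_dec 0 u) as [H|H]; [|contradiction].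
    apply (proj2_sig (R_complete _ (Hseq u H))). }
  exists K; intros A eps HA Heps.
  destruct (Hcauchy (A + 1) (eps / 2) ltac:(lra) ltac:(lra)) as [R0 HR0].
  exists R0; intros r Hr u Hu.
  destruct (HK u ltac:(lra) (eps / 2) ltac:(lra)) as [N1 HN1].
  destruct (INR_S_eventually_gt R0) as [N2 HN2].
  set (m := Nat.max N1 N2).
  specialize (HN1 m ltac:(lia)); specialize (HN2 m ltac:(lia)); unfold Rdist in HN1.
  specialize (HR0 r (INR m + 1) Hr HN2 u ltac:(lra)).
  replace (F r u - K u) with ((F r u - F (INR m + 1) u) + (F (INR m + 1) u - K u)) by ring.
  eapply Rle_lt_trans; [apply Rabs_triang|]; lra.
Qed.

Lemma uniform_limit_continuous (F : R -> R -> R) (K : R -> R) :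
  (forall A eps, 0 <= A -> 0 < eps ->
     exists R0, forall r, R0 < r -> forall u, 0 <= u <= A -> Rabs (F r u - K u) < eps) ->
  (forall r u, 0 <= u < r -> continuity_pt (F r) u) ->
  forall u, 0 <= u -> forall eps, 0 < eps ->
    exists d, 0 < d /\ forall v, 0 <= v -> Rabs (v - u) < d -> Rabs (K v - K u) < eps.
Proof.
  intros Hunif Hcont u Hu eps Heps.
  destruct (Hunif (u + 1) (eps / 3) ltac:(lra) ltac:(lra)) as [R0 HR0].
  set (r := Rmax R0 (u + 1) + 1).
  pose proof (Rmax_l R0 (u + 1)); pose proof (Rmax_r R0 (u + 1)).
  destruct (continuity_pt_eps _ _ (Hcont r u ltac:(unfold r; lra)) (eps / 3) ltac:(lra))
    as [d [Hd Hnear]].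
  exists (Rmin d 1); split; [apply Rmin_glb_lt; lra|].
  intros v Hv Hvu; pose proof (Rmin_l d 1); pose proof (Rmin_r d 1).
  assert (v <= u + 1) by (apply Rabs_def2 in Hvu; lra).
  specialize (Hnear v ltac:(lra)).
  pose proof (HR0 r ltac:(unfold r; lra) v ltac:(lra)).
  pose proof (HR0 r ltac:(unfold r; lra) u ltac:(lra)).
  replace (K v - K u) with (- (F r v - K v) + (F r v - F r u) + (F r u - K u)) by ring.
  eapply Rle_lt_trans; [apply Rabs_triang|].
  eapply Rle_lt_trans; [apply Rplus_le_compat_r, Rabs_triang|].
  rewrite Rabs_Ropp; lra.
Qed.

Lemma sinh_le x y : x <= y -> sinh x <= sinh y.
Proof. intros [H| ->]; [left; now apply sinh_lt|lra]. Qed.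

Lemma sinh_pos x : 0 < x -> 0 < sinh x.
Proof. intros; rewrite <- sinh_0; now apply sinh_lt. Qed.

Lemma cosh_le x y : 0 <= x <= y -> cosh x <= cosh y.
Proof.
  intros Hxy.
  enough (0 - 0 <= cosh y - cosh x) by lra.
  apply (incr_le_of_deriv_le_deriv (fun _ => 0) (fun _ => 0) cosh sinh); try lra.
  - intros; apply derivable_pt_lim_const.
  - intros; apply derivable_pt_lim_cosh.
  - intros c Hc; rewrite <- sinh_0; apply sinh_le; lra.
Qed.

Lemma cosh_ge_1 x : 0 <= x -> 1 <= cosh x.
Proof. intros; rewrite <- cosh_0; apply cosh_le; lra. Qed.

Lemma DM_pos M n u : 0 < u -> 0 < DM M n u.
Proof.
  intros Hu.
  assert (0 < sinh u) by now apply sinh_pos.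
  assert (0 < sinh (u / 2)) by (apply sinh_pos; lra).
  assert (0 < cosh (u / 2)) by (pose proof (cosh_ge_1 (u / 2)); lra).
  destruct M; unfold DM;
    repeat (first [assumption | apply pow_lt | apply Rmult_lt_0_compat]); lra.
Qed.

Lemma DM_le M n x y : 0 <= x <= y -> DM M n x <= DM M n y.
Proof.
  intros Hxy.
  assert (0 <= sinh x) by (rewrite <- sinh_0; apply sinh_le; lra).
  assert (sinh x <= sinh y) by (apply sinh_le; lra).
  assert (0 <= sinh (x / 2)) by (rewrite <- sinh_0; apply sinh_le; lra).
  assert (sinh (x / 2) <= sinh (y / 2)) by (apply sinh_le; lra).
  assert (1 <= cosh (x / 2)) by (apply cosh_ge_1; lra).
  assert (cosh (x / 2) <= cosh (y / 2)) by (apply cosh_le; lra).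
  assert (0 <= 2 ^ (n - 1)) by (apply pow_le; lra).
  destruct M; unfold DM;
    repeat (first [ apply pow_incr; lra | apply pow_le; lra
                  | apply Rmult_le_compat | apply Rmult_le_pos | lra ]).
Qed.

Lemma Kfun_0 n h : Kfun n h 0 = 0.
Proof. unfold Kfun; ring. Qed.

Record radial_solution (D : R -> R) (n : nat) (r : R) (h h1 h2 : R -> R) : Prop := {
  sol_radius : 0 < r;
  sol_deriv : forall u, - r < u < r -> derivable_pt_lim h u (h1 u);
  sol_deriv2 : forall u, - r < u < r -> derivable_pt_lim h1 u (h2 u);
  sol_ode : forall u, 0 <= u < r -> h2 u * h1 u ^ (n - 1) = exp (h u) * D u;
  sol_blowup : blows_up_at r h;
  sol_even : forall u, - r < u < r -> h (- u) = h u }.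
Arguments sol_radius {D n r h h1 h2}.
Arguments sol_deriv {D n r h h1 h2}.
Arguments sol_deriv2 {D n r h h1 h2}.
Arguments sol_ode {D n r h h1 h2}.
Arguments sol_blowup {D n r h h1 h2}.
Arguments sol_even {D n r h h1 h2}.

Section RadialSolution.

Variables (D : R -> R) (n : nat).
Hypothesis D_pos : forall u, 0 < u -> 0 < D u.
Hypothesis D_le : forall x y, 0 <= x <= y -> D x <= D y.
Hypothesis n_ge_2 : (2 <= n)%nat.

Lemma INR_n_ge_2 : 2 <= INR n.
Proof. apply (le_INR 2) in n_ge_2; simpl in n_ge_2; lra. Qed.

Definition slope_floor L := Rmin 1 (INR n * D 1 * exp (- L)).
Definition doubling_point L := 2 + ln 2 / slope_floor L.
Definition growth_floor := Rmin 1 ((INR n + 1) * D 1 / 2).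
Definition radius_bound L :=
  doubling_point L + (INR n + 1) * exp (L / (INR n + 1)) / growth_floor.

Definition slope_cap A := Rmax 1 (INR n * A * D A).

Lemma slope_floor_pos L : 0 < slope_floor L.
Proof.
  pose proof INR_n_ge_2; pose proof (D_pos 1 ltac:(lra)); pose proof (exp_pos (- L)).
  apply Rmin_glb_lt; [lra|]; apply Rmult_lt_0_compat; [nra|lra].
Qed.

Lemma doubling_point_gt_2 L : 2 < doubling_point L.
Proof.
  pose proof (slope_floor_pos L); pose proof ln_lt_2.
  enough (0 < ln 2 / slope_floor L) by (unfold doubling_point; lra).
  apply Rdiv_lt_0_compat; lra.
Qed.

Lemma growth_floor_pos : 0 < growth_floor.
Proof.
  pose proof INR_n_ge_2; pose proof (D_pos 1 ltac:(lra)).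
  apply Rmin_glb_lt; [lra|]; apply Rdiv_lt_0_compat; nra.
Qed.

Lemma slope_cap_ge_1 A : 1 <= slope_cap A.
Proof. apply Rmax_l. Qed.

Section OneSolution.

Variables (r : R) (h h1 h2 : R -> R).
Hypothesis Hh : radial_solution D n r h h1 h2.

Lemma slope_0 : h1 0 = 0.
Proof.
  pose proof (sol_radius Hh).
  apply (derivable_pt_lim_even_0 h r); [lra|apply Hh|apply Hh; lra].
Qed.

Lemma slope_neq_0 u : 0 < u < r -> h1 u <> 0.
Proof.
  intros Hu Hz; pose proof (sol_ode Hh u ltac:(lra)) as Hode.
  rewrite Hz, pow_i, Rmult_0_r in Hode by lia.
  pose proof (exp_pos (h u)); pose proof (D_pos u ltac:(lra)); nra.
Qed.

(* As h1 has no zero on (0, r), a negative value would persist up to r and keep h bounded. *)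
Lemma slope_pos u0 : 0 < u0 < r -> 0 < h1 u0.
Proof.
  intros Hu0.
  destruct (Rlt_le_dec 0 (h1 u0)) as [|Hle]; auto; exfalso.
  assert (Hneg : h1 u0 < 0)
    by (destruct Hle; auto; exfalso; now apply (slope_neq_0 u0)).
  assert (Hneg_after : forall u, u0 <= u < r -> h1 u < 0).
  { intros u Hu; destruct (Rlt_le_dec (h1 u) 0) as [|Hge]; auto; exfalso.
    assert (Hpos : 0 < h1 u)
      by (destruct Hge; auto; exfalso; apply (slope_neq_0 u); [lra|auto]).
    assert (u0 < u) by (destruct (Req_dec u0 u) as [->|]; lra).
    destruct (IVT_interv h1 u0 u) as [z [Hz Hz0]]; auto.
    - intros a Ha; apply derivable_continuous_pt; exists (h2 a).
      apply (sol_deriv2 Hh); lra.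
    - apply (slope_neq_0 z); auto; lra. }
  assert (Hdecr : forall u, u0 <= u < r -> h u <= h u0).
  { intros u Hu; enough (h u - h u0 <= 0 * (u - u0)) by lra.
    apply (incr_le_of_deriv_le h h1); try lra.
    - intros c Hc; apply (sol_deriv Hh); lra.
    - intros c Hc; left; apply Hneg_after; lra. }
  destruct (sol_blowup Hh (h u0)) as [d [Hd Hnear]].
  pose proof (Rmax_l u0 (r - d / 2)); pose proof (Rmax_r u0 (r - d / 2)).
  set (u := Rmax u0 (r - d / 2)) in *.
  assert (u < r) by (apply Rmax_lub_lt; lra).
  specialize (Hnear u ltac:(lra)); specialize (Hdecr u ltac:(lra)); lra.
Qed.

Lemma slope_nonneg u : 0 <= u < r -> 0 <= h1 u.
Proof.
  intros Hu; destruct (Req_dec u 0) as [->|].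
  - rewrite slope_0; lra.
  - left; apply slope_pos; lra.
Qed.

Lemma h_le x y : 0 <= x <= y -> y < r -> h x <= h y.
Proof.
  intros Hxy Hy; enough (0 * (y - x) <= h y - h x) by lra.
  apply (incr_ge_of_deriv_ge h h1); try lra.
  - intros c Hc; apply (sol_deriv Hh); pose proof (sol_radius Hh); lra.
  - intros c Hc; apply slope_nonneg; lra.
Qed.

Lemma exp_rise_ge_1 u : 0 <= u < r -> 1 <= exp (h u - h 0).
Proof.
  intros Hu; rewrite <- exp_0; apply exp_le_compat.
  pose proof (h_le 0 u ltac:(lra) ltac:(lra)); lra.
Qed.

Lemma slope_pow_deriv u : 0 <= u < r ->
  derivable_pt_lim (fun y => h1 y ^ n) u (INR n * (exp (h u) * D u)).
Proof.
  intros Hu; eapply derivable_pt_lim_val.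
  - apply derivable_pt_lim_pow_fun, (sol_deriv2 Hh); lra.
  - rewrite <- (sol_ode Hh) by lra.
    replace (pred n) with (n - 1)%nat by lia; ring.
Qed.

Section APrioriRadius.

Variable L : R.
Hypothesis h0_ge : - L <= h 0.

Lemma slope_floor_le u : 2 <= u < r -> slope_floor L <= h1 u.
Proof.
  intros Hu; pose proof INR_n_ge_2; pose proof (D_pos 1 ltac:(lra)).
  pose proof (exp_pos (- L)).
  apply (Rmin_1_le_of_le_pow _ n); [apply slope_nonneg; lra|lia|].
  assert (Hincr : INR n * D 1 * exp (- L) * (u - 1) <= h1 u ^ n - h1 1 ^ n).
  { apply (incr_ge_of_deriv_ge (fun y => h1 y ^ n)
             (fun y => INR n * (exp (h y) * D y))); [lra| |].
    - intros c Hc; apply slope_pow_deriv; lra.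
    - intros c Hc; rewrite Rmult_assoc, (Rmult_comm (D 1)).
      apply Rmult_le_compat_l; [lra|].
      apply Rmult_le_compat; [lra|lra| |apply D_le; lra].
      apply exp_le_compat; pose proof (h_le 0 c ltac:(lra) ltac:(lra)); lra. }
  assert (0 <= h1 1 ^ n) by (apply pow_le, slope_nonneg; lra).
  assert (0 < INR n * D 1 * exp (- L)) by (apply Rmult_lt_0_compat; nra).
  nra.
Qed.

Lemma h_doubling : doubling_point L < r -> h 1 + ln 2 <= h (doubling_point L).
Proof.
  intros Hr; pose proof (slope_floor_pos L); pose proof (doubling_point_gt_2 L).
  assert (Hincr : slope_floor L * (doubling_point L - 2) <= h (doubling_point L) - h 2).
  { apply (incr_ge_of_deriv_ge h h1); [lra| |].
    - intros c Hc; apply (sol_deriv Hh); lra.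
    - intros c Hc; apply slope_floor_le; lra. }
  replace (slope_floor L * (doubling_point L - 2)) with (ln 2) in Hincr
    by (unfold doubling_point; field; lra).
  pose proof (h_le 1 2 ltac:(lra) ltac:(lra)); lra.
Qed.

(* The energy h1^(n+1) - (n+1) D(1) e^h is nondecreasing on [1, r). *)
Lemma slope_pow_S_ge u : doubling_point L <= u < r ->
  (INR n + 1) * D 1 / 2 * exp (h u) <= h1 u ^ S n.
Proof.
  intros Hu; pose proof (doubling_point_gt_2 L); pose proof INR_n_ge_2.
  pose proof (D_pos 1 ltac:(lra)).
  set (k := (INR n + 1) * D 1).
  assert (Hincr : 0 * (u - 1) <= (h1 u ^ S n - k * exp (h u)) - (h1 1 ^ S n - k * exp (h 1))).
  { apply (incr_ge_of_deriv_ge (fun y => h1 y ^ S n - k * exp (h y))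
             (fun y => INR (S n) * h1 y ^ n * h2 y - k * (exp (h y) * h1 y))); [lra| |].
    - intros c Hc; apply derivable_pt_lim_minus_fun.
      + apply derivable_pt_lim_pow_fun, (sol_deriv2 Hh); lra.
      + apply derivable_pt_lim_scal_fun, derivable_pt_lim_exp_fun, (sol_deriv Hh); lra.
    - intros c Hc.
      replace (INR (S n) * h1 c ^ n * h2 c - k * (exp (h c) * h1 c))
        with ((INR n + 1) * h1 c * (h2 c * h1 c ^ (n - 1) - D 1 * exp (h c))).
      2: { assert (Hpow : h1 c ^ n = h1 c * h1 c ^ (n - 1))
             by (replace n with (S (n - 1)) at 1 by lia; reflexivity).
           rewrite S_INR, Hpow; unfold k; ring. }
      rewrite (sol_ode Hh) by lra.
      apply Rmult_le_pos; [apply Rmult_le_pos; [lra|apply slope_nonneg; lra]|].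
      pose proof (D_le 1 c ltac:(lra)); pose proof (exp_pos (h c)); nra. }
  assert (0 <= h1 1 ^ S n) by (apply pow_le, slope_nonneg; lra).
  assert (Hdouble : 2 * exp (h 1) <= exp (h u)).
  { rewrite <- (exp_ln 2), <- exp_plus by lra; apply exp_le_compat.
    pose proof h_doubling ltac:(lra); pose proof (h_le (doubling_point L) u ltac:(lra) ltac:(lra)).
    lra. }
  assert (0 <= k * (exp (h u) - 2 * exp (h 1))) by (apply Rmult_le_pos; unfold k; nra).
  unfold k in *; lra.
Qed.

Lemma growth_floor_le u : doubling_point L <= u < r ->
  growth_floor <= h1 u * exp (- h u / (INR n + 1)).
Proof.
  intros Hu; pose proof INR_n_ge_2; pose proof (doubling_point_gt_2 L).
  apply (Rmin_1_le_of_le_pow _ (S n)); [| lia |].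
  { apply Rmult_le_pos; [apply slope_nonneg; lra|left; apply exp_pos]. }
  rewrite Rpow_mult_distr, exp_pow, S_INR.
  replace ((INR n + 1) * (- h u / (INR n + 1))) with (- h u) by (field; lra).
  pose proof (slope_pow_S_ge u Hu) as Hge.
  apply (Rmult_le_compat_r (exp (- h u))) in Hge; [|left; apply exp_pos].
  rewrite Rmult_assoc, (Rmult_comm (exp (h u))), exp_opp_mul, Rmult_1_r in Hge.
  exact Hge.
Qed.

(* g = -(n+1) e^(-h/(n+1)) stays negative while g' >= growth_floor past the doubling point. *)
Lemma radius_le : r <= radius_bound L.
Proof.
  pose proof INR_n_ge_2; pose proof growth_floor_pos; pose proof (doubling_point_gt_2 L).
  destruct (Rle_lt_dec r (radius_bound L)) as [|Hlt]; auto; exfalso.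
  set (u1 := doubling_point L) in *.
  set (len := (INR n + 1) * exp (L / (INR n + 1)) / growth_floor).
  assert (Hbound : radius_bound L = u1 + len) by reflexivity.
  assert (Hlen : 0 <= len).
  { apply Rmult_le_pos; [|left; now apply Rinv_0_lt_compat].
    pose proof (exp_pos (L / (INR n + 1))); nra. }
  set (u := (radius_bound L + r) / 2).
  assert (Hu : u1 <= u < r) by (unfold u; lra).
  set (g := fun y => - (INR n + 1) * exp (- h y / (INR n + 1))).
  assert (Hincr : growth_floor * (u - u1) <= g u - g u1).
  { apply (incr_ge_of_deriv_ge g (fun y => h1 y * exp (- h y / (INR n + 1)))); [lra| |].
    - intros c Hc; unfold g; eapply derivable_pt_lim_val.
      + apply derivable_pt_lim_scal_fun, derivable_pt_lim_exp_fun.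
        apply (derivable_pt_lim_ext (fun y => - / (INR n + 1) * h y));
          [intros; unfold Rdiv; ring|].
        apply derivable_pt_lim_scal_fun, (sol_deriv Hh); lra.
      + cbv beta; field; lra.
    - intros c Hc; apply growth_floor_le; fold u1; lra. }
  assert (g u <= 0) by (unfold g; pose proof (exp_pos (- h u / (INR n + 1))); nra).
  assert (- g u1 <= (INR n + 1) * exp (L / (INR n + 1))).
  { unfold g; enough (exp (- h u1 / (INR n + 1)) <= exp (L / (INR n + 1))) by nra.
    apply exp_le_compat; unfold Rdiv; apply Rmult_le_compat_r.
    - left; apply Rinv_0_lt_compat; lra.
    - pose proof (h_le 0 u1 ltac:(lra) ltac:(lra)); lra. }
  assert (u - u1 <= len).
  { apply (Rmult_le_reg_l growth_floor); [lra|].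
    unfold len; replace (growth_floor * ((INR n + 1) * exp (L / (INR n + 1)) / growth_floor))
      with ((INR n + 1) * exp (L / (INR n + 1))) by (field; lra).
    lra. }
  unfold u in *; lra.
Qed.

End APrioriRadius.

Lemma exp_h0_lt eta : 0 < eta -> radius_bound (- INR n * ln eta) < r ->
  exp (h 0 / INR n) < eta.
Proof.
  intros Heta Hr; pose proof INR_n_ge_2.
  destruct (Rlt_le_dec (h 0) (INR n * ln eta)) as [Hlt|Hge].
  - rewrite <- (exp_ln eta) by lra; apply exp_increasing.
    apply (Rmult_lt_reg_l (INR n)); [lra|].
    replace (INR n * (h 0 / INR n)) with (h 0) by (field; lra); lra.
  - pose proof (radius_le (- INR n * ln eta) ltac:(lra)); lra.
Qed.

Lemma Kfun_deriv u : - r < u < r ->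
  derivable_pt_lim (Kfun n h) u (exp (- h 0 / INR n) * h1 u).
Proof.
  intros Hu; unfold Kfun.
  apply derivable_pt_lim_scal_fun, (derivable_pt_lim_plus_const_fun h (- h 0)).
  exact (sol_deriv Hh u Hu).
Qed.

Lemma Kfun_continuity_pt u : - r < u < r -> continuity_pt (Kfun n h) u.
Proof.
  intros Hu; apply derivable_continuous_pt.
  exists (exp (- h 0 / INR n) * h1 u); now apply Kfun_deriv.
Qed.

Lemma Kfun_nonneg u : 0 <= u < r -> 0 <= Kfun n h u.
Proof.
  intros Hu; unfold Kfun; apply Rmult_le_pos; [left; apply exp_pos|].
  pose proof (h_le 0 u ltac:(lra) ltac:(lra)); lra.
Qed.

Lemma Kfun_blowup : blows_up_at r (Kfun n h).
Proof.
  intros B; pose proof (exp_pos (- h 0 / INR n)); set (E := exp (- h 0 / INR n)) in *.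
  destruct (sol_blowup Hh (h 0 + B / E)) as [d [Hd Hnear]].
  exists d; split; auto; intros u Hu; specialize (Hnear u Hu).
  unfold Kfun; fold E.
  apply (Rmult_lt_reg_l (/ E)); [now apply Rinv_0_lt_compat|].
  replace (/ E * (E * (h u - h 0))) with (h u - h 0) by (field; lra).
  replace (/ E * B) with (B / E) by (field; lra); lra.
Qed.

Lemma Kfun_ode u : 0 <= u < r ->
  exp (- h 0 / INR n) * h2 u * (exp (- h 0 / INR n) * h1 u) ^ (n - 1)
  = exp (exp (h 0 / INR n) * Kfun n h u) * D u.
Proof.
  intros Hu; pose proof INR_n_ge_2.
  assert (Hinv : exp (h 0 / INR n) * exp (- h 0 / INR n) = 1).
  { rewrite <- exp_plus; replace (h 0 / INR n + - h 0 / INR n) with 0 by (field; lra).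
    apply exp_0. }
  assert (Hpow : exp (- h 0 / INR n) ^ n = exp (- h 0))
    by (rewrite exp_pow; f_equal; field; lra).
  unfold Kfun; rewrite <- Rmult_assoc, Hinv, Rmult_1_l, Rpow_mult_distr.
  replace (exp (- h 0 / INR n) * h2 u * (exp (- h 0 / INR n) ^ (n - 1) * h1 u ^ (n - 1)))
    with (exp (- h 0 / INR n) ^ S (n - 1) * (h2 u * h1 u ^ (n - 1))) by (simpl; ring).
  replace (S (n - 1)) with n by lia.
  rewrite Hpow, (sol_ode Hh u Hu); unfold Rminus; rewrite exp_plus; ring.
Qed.

Lemma Kslope_pow_deriv u : 0 <= u < r ->
  derivable_pt_lim (fun y => (exp (- h 0 / INR n) * h1 y) ^ n) u
    (INR n * (exp (h u - h 0) * D u)).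
Proof.
  intros Hu; pose proof INR_n_ge_2.
  apply (derivable_pt_lim_ext (fun y => exp (- h 0 / INR n) ^ n * h1 y ^ n));
    [intros; now rewrite Rpow_mult_distr|].
  eapply derivable_pt_lim_val; [apply derivable_pt_lim_scal_fun, slope_pow_deriv, Hu|].
  rewrite exp_pow; replace (INR n * (- h 0 / INR n)) with (- h 0) by (field; lra).
  unfold Rminus; rewrite exp_plus; ring.
Qed.

Lemma Kslope_le A t : 0 < A < r -> 0 <= t <= A ->
  exp (- h 0 / INR n) * h1 t <= slope_cap A * exp (h t - h 0).
Proof.
  intros HA Ht; pose proof INR_n_ge_2; pose proof (slope_cap_ge_1 A).
  pose proof (Rmax_r 1 (INR n * A * D A)); pose proof (D_pos A ltac:(lra)).
  fold (slope_cap A) in *.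
  pose proof (exp_pos (- h 0 / INR n)); set (E := exp (- h 0 / INR n)) in *.
  pose proof (exp_rise_ge_1 t ltac:(lra)).
  assert (Hincr : (E * h1 t) ^ n - (E * h1 0) ^ n
                  <= INR n * (exp (h t - h 0) * D A) * (t - 0)).
  { apply (incr_le_of_deriv_le (fun y => (E * h1 y) ^ n)
             (fun y => INR n * (exp (h y - h 0) * D y))); [lra| |].
    - intros c Hc; apply Kslope_pow_deriv; lra.
    - intros c Hc; apply Rmult_le_compat_l; [lra|].
      apply Rmult_le_compat; [left; apply exp_pos|left; apply D_pos; lra| |apply D_le; lra].
      apply exp_le_compat; pose proof (h_le c t ltac:(lra) ltac:(lra)); lra. }
  rewrite slope_0, Rmult_0_r, pow_i in Hincr by lia.
  apply (pow_le_reg _ _ n); [apply Rmult_le_pos; [lra|apply slope_nonneg; lra]|nra|lia|].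
  assert (INR n * (exp (h t - h 0) * D A) * (t - 0) <= slope_cap A * exp (h t - h 0)).
  { replace (INR n * (exp (h t - h 0) * D A) * (t - 0))
      with (exp (h t - h 0) * (INR n * t * D A)) by ring.
    rewrite (Rmult_comm (slope_cap A)); apply Rmult_le_compat_l; [lra|].
    enough (INR n * t * D A <= INR n * A * D A) by lra.
    apply Rmult_le_compat_r; [lra|]; apply Rmult_le_compat_l; lra. }
  assert (slope_cap A * exp (h t - h 0) <= (slope_cap A * exp (h t - h 0)) ^ n)
    by (apply le_pow_self; [nra|lia]).
  lra.
Qed.

(* The derivative e^(h_0 - h) h1 of -e^(h_0 - h) is at most c N by Kslope_le. *)
Lemma exp_rise_le A u : 0 < A < r ->
  exp (h 0 / INR n) * slope_cap A * A <= 1 / 2 -> 0 <= u <= A ->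
  exp (h u - h 0) <= 1 + 2 * (exp (h 0 / INR n) * slope_cap A * A).
Proof.
  intros HA Hsmall Hu; pose proof INR_n_ge_2; pose proof (slope_cap_ge_1 A).
  pose proof (exp_pos (h 0 / INR n)); set (c := exp (h 0 / INR n)) in *.
  assert (Hinv : c * exp (- h 0 / INR n) = 1).
  { unfold c; rewrite <- exp_plus; replace (h 0 / INR n + - h 0 / INR n) with 0 by (field; lra).
    apply exp_0. }
  assert (Hincr : - exp (- (h u - h 0)) - - exp (- (h 0 - h 0)) <= c * slope_cap A * (u - 0)).
  { apply (incr_le_of_deriv_le (fun y => - exp (- (h y - h 0)))
             (fun y => exp (- (h y - h 0)) * h1 y)); [lra| |].
    - intros y Hy; eapply derivable_pt_lim_val.
      + apply (derivable_pt_lim_opp (fun y => exp (- (h y - h 0)))).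
        apply derivable_pt_lim_exp_fun; eapply derivable_pt_lim_val.
        * apply derivable_pt_lim_opp, derivable_pt_lim_plus_const_fun, (sol_deriv Hh); lra.
        * reflexivity.
      + cbv beta; ring.
    - intros y Hy; pose proof (Kslope_le A y HA ltac:(lra)) as Hslope.
      apply (Rmult_le_compat_l c) in Hslope; [|lra].
      rewrite <- Rmult_assoc, Hinv, Rmult_1_l in Hslope.
      apply (Rmult_le_compat_l (exp (- (h y - h 0)))) in Hslope; [|left; apply exp_pos].
      replace (exp (- (h y - h 0)) * (c * (slope_cap A * exp (h y - h 0))))
        with (c * slope_cap A * (exp (- (h y - h 0)) * exp (h y - h 0))) in Hslope by ring.
      rewrite exp_opp_mul, Rmult_1_r in Hslope; exact Hslope. }
  replace (- (h 0 - h 0)) with 0 in Hincr by ring; rewrite exp_0 in Hincr.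
  pose proof (exp_opp_mul (h u - h 0)); pose proof (exp_pos (h u - h 0)).
  assert (c * slope_cap A * u <= c * slope_cap A * A) by (apply Rmult_le_compat_l; nra).
  assert (0 <= c * slope_cap A * A) by (apply Rmult_le_pos; [apply Rmult_le_pos|]; lra).
  set (x := c * slope_cap A * A) in *.
  assert (exp (h u - h 0) * (1 - x) <= 1) by nra.
  assert (1 <= (1 + 2 * x) * (1 - x)) by nra.
  apply (Rmult_le_reg_r (1 - x)); lra.
Qed.

Lemma Kfun_le A u : 0 < A < r ->
  exp (h 0 / INR n) * slope_cap A * A <= 1 / 2 -> 0 <= u <= A ->
  Kfun n h u <= 2 * slope_cap A * A.
Proof.
  intros HA Hsmall Hu; pose proof (slope_cap_ge_1 A).
  assert (Hincr : Kfun n h u - Kfun n h 0 <= 2 * slope_cap A * (u - 0)).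
  { apply (incr_le_of_deriv_le _ (fun y => exp (- h 0 / INR n) * h1 y)); [lra| |].
    - intros y Hy; apply Kfun_deriv; lra.
    - intros y Hy; pose proof (Kslope_le A y HA ltac:(lra)).
      pose proof (exp_rise_le A y HA Hsmall ltac:(lra)).
      assert (slope_cap A * exp (h y - h 0) <= slope_cap A * 2)
        by (apply Rmult_le_compat_l; lra).
      lra. }
  rewrite Kfun_0 in Hincr; nra.
Qed.

End OneSolution.

Section TwoSolutions.

Variables (r s : R) (h h1 h2 g g1 g2 : R -> R).
Hypothesis Hh : radial_solution D n r h h1 h2.
Hypothesis Hg : radial_solution D n s g g1 g2.

Lemma Kslope_compare A t : A < r -> A < s -> 0 <= t <= A ->
  exp (- h 0 / INR n) * h1 t <= exp (h A - h 0) * (exp (- g 0 / INR n) * g1 t).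
Proof.
  intros Hr Hs Ht.
  set (lam := exp (h A - h 0)).
  assert (Hlam : 1 <= lam) by (apply (exp_rise_ge_1 _ _ _ _ Hh); lra).
  assert (Hincr : (exp (- h 0 / INR n) * h1 t) ^ n - (exp (- h 0 / INR n) * h1 0) ^ n
       <= lam * (exp (- g 0 / INR n) * g1 t) ^ n - lam * (exp (- g 0 / INR n) * g1 0) ^ n).
  { apply (incr_le_of_deriv_le_deriv (fun y => (exp (- h 0 / INR n) * h1 y) ^ n)
             (fun y => INR n * (exp (h y - h 0) * D y))
             (fun y => lam * (exp (- g 0 / INR n) * g1 y) ^ n)
             (fun y => lam * (INR n * (exp (g y - g 0) * D y)))); [lra| | |].
    - intros c Hc; apply (Kslope_pow_deriv _ _ _ _ Hh); lra.
    - intros c Hc; apply derivable_pt_lim_scal_fun, (Kslope_pow_deriv _ _ _ _ Hg); lra.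
    - intros c Hc; pose proof INR_n_ge_2; pose proof (D_pos c ltac:(lra)).
      assert (exp (h c - h 0) <= lam).
      { apply exp_le_compat; pose proof (h_le _ _ _ _ Hh c A ltac:(lra) Hr); lra. }
      pose proof (exp_rise_ge_1 _ _ _ _ Hg c ltac:(lra)).
      rewrite (Rmult_comm lam), Rmult_assoc; apply Rmult_le_compat_l; [lra|].
      assert (exp (h c - h 0) * D c <= lam * D c) by (apply Rmult_le_compat_r; lra).
      assert (0 <= D c * lam) by nra.
      nra. }
  rewrite (slope_0 _ _ _ _ Hh), (slope_0 _ _ _ _ Hg), !Rmult_0_r, pow_i in Hincr by lia.
  pose proof (exp_pos (- h 0 / INR n)); pose proof (exp_pos (- g 0 / INR n)).
  pose proof (slope_nonneg _ _ _ _ Hh t ltac:(lra)).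
  pose proof (slope_nonneg _ _ _ _ Hg t ltac:(lra)).
  assert (0 <= exp (- g 0 / INR n) * g1 t) by (apply Rmult_le_pos; lra).
  apply (pow_le_reg _ _ n); [apply Rmult_le_pos; lra|nra|lia|].
  rewrite (Rpow_mult_distr lam).
  assert (0 <= (exp (- g 0 / INR n) * g1 t) ^ n) by (apply pow_le; lra).
  assert (lam <= lam ^ n) by (apply le_pow_self; [lra|lia]).
  nra.
Qed.

Lemma Kfun_compare A u : A < r -> A < s -> 0 <= u <= A ->
  Kfun n h u <= exp (h A - h 0) * Kfun n g u.
Proof.
  intros Hr Hs Hu.
  assert (Hincr : Kfun n h u - Kfun n h 0
                  <= exp (h A - h 0) * Kfun n g u - exp (h A - h 0) * Kfun n g 0).
  { apply (incr_le_of_deriv_le_deriv (Kfun n h) (fun y => exp (- h 0 / INR n) * h1 y)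
             (fun y => exp (h A - h 0) * Kfun n g y)
             (fun y => exp (h A - h 0) * (exp (- g 0 / INR n) * g1 y))); [lra| | |].
    - intros c Hc; apply (Kfun_deriv _ _ _ _ Hh); lra.
    - intros c Hc; apply derivable_pt_lim_scal_fun, (Kfun_deriv _ _ _ _ Hg); lra.
    - intros c Hc; apply Kslope_compare; lra. }
  rewrite !Kfun_0 in Hincr; lra.
Qed.

Lemma Kfun_sub_le A u : 0 < A -> A < r -> A < s ->
  exp (h 0 / INR n) * slope_cap A * A <= 1 / 2 ->
  exp (g 0 / INR n) * slope_cap A * A <= 1 / 2 -> 0 <= u <= A ->
  Kfun n h u - Kfun n g u <= 4 * (exp (h 0 / INR n) * slope_cap A * A) * (slope_cap A * A).
Proof.
  intros HA Hr Hs Hsmall_h Hsmall_g Hu.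
  pose proof (Kfun_compare A u Hr Hs Hu).
  pose proof (exp_rise_le _ _ _ _ Hh A A ltac:(lra) Hsmall_h ltac:(lra)).
  pose proof (Kfun_le _ _ _ _ Hg A u ltac:(lra) Hsmall_g Hu).
  pose proof (Kfun_nonneg _ _ _ _ Hg u ltac:(lra)).
  pose proof (exp_rise_ge_1 _ _ _ _ Hh A ltac:(lra)).
  assert ((exp (h A - h 0) - 1) * Kfun n g u
          <= 2 * (exp (h 0 / INR n) * slope_cap A * A) * (2 * slope_cap A * A))
    by (apply Rmult_le_compat; lra).
  lra.
Qed.

End TwoSolutions.

(* Beyond radius_bound (-n ln eta) the constant e^(a_r/n) is below eta, and Kfun_sub_le
   then makes the difference O(eta) on [0, A]. *)
Lemma Kfun_uniformly_cauchy (h : R -> R -> R) :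
  (forall r, 0 < r -> exists h1 h2, radial_solution D n r (h r) h1 h2) ->
  forall A eps, 0 < A -> 0 < eps ->
  exists R0, forall r s, R0 < r -> R0 < s -> forall u, 0 <= u <= A ->
    Rabs (Kfun n (h r) u - Kfun n (h s) u) < eps.
Proof.
  intros Hsol A eps HA Heps.
  pose proof (slope_cap_ge_1 A).
  set (NA := slope_cap A * A).
  assert (HNA : 0 < NA) by (unfold NA; nra).
  set (eta := Rmin (1 / (2 * NA)) (eps / (8 * NA * NA))).
  assert (Heta : 0 < eta) by (apply Rmin_glb_lt; apply Rdiv_lt_0_compat; nra).
  assert (Heta_half : eta * NA <= 1 / 2).
  { pose proof (Rmin_l (1 / (2 * NA)) (eps / (8 * NA * NA))) as Hmin.
    apply (Rmult_le_compat_r NA) in Hmin; [|lra].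
    replace (1 / (2 * NA) * NA) with (1 / 2) in Hmin by (field; lra); exact Hmin. }
  assert (Heta_eps : 4 * (eta * NA) * NA <= eps / 2).
  { pose proof (Rmin_r (1 / (2 * NA)) (eps / (8 * NA * NA))) as Hmin.
    apply (Rmult_le_compat_r (4 * NA * NA)) in Hmin; [|nra].
    replace (eps / (8 * NA * NA) * (4 * NA * NA)) with (eps / 2) in Hmin by (field; lra).
    fold eta in Hmin; lra. }
  exists (Rmax A (radius_bound (- INR n * ln eta))).
  intros r s Hr Hs u Hu.
  pose proof (Rmax_l A (radius_bound (- INR n * ln eta))).
  pose proof (Rmax_r A (radius_bound (- INR n * ln eta))).
  assert (Hsmall : forall t f f1 f2, radial_solution D n t f f1 f2 ->
            Rmax A (radius_bound (- INR n * ln eta)) < t ->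
            exp (f 0 / INR n) * slope_cap A * A <= eta * NA).
  { intros t f f1 f2 Hf Ht.
    pose proof (exp_h0_lt _ _ _ _ Hf eta Heta ltac:(lra)).
    unfold NA; rewrite <- Rmult_assoc.
    apply Rmult_le_compat_r; [lra|]; apply Rmult_le_compat_r; lra. }
  destruct (Hsol r ltac:(lra)) as (h1 & h2 & Hhr).
  destruct (Hsol s ltac:(lra)) as (g1 & g2 & Hhs).
  pose proof (Hsmall r _ _ _ Hhr Hr); pose proof (Hsmall s _ _ _ Hhs Hs).
  pose proof (Kfun_sub_le r s _ _ _ _ _ _ Hhr Hhs A u HA ltac:(lra) ltac:(lra)
                ltac:(lra) ltac:(lra) Hu) as Hsub_rs.
  pose proof (Kfun_sub_le s r _ _ _ _ _ _ Hhs Hhr A u HA ltac:(lra) ltac:(lra)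
                ltac:(lra) ltac:(lra) Hu) as Hsub_sr.
  fold NA in Hsub_rs, Hsub_sr.
  apply Rabs_def1; nra.
Qed.

End RadialSolution.

Lemma valid_dim_ge_2 M n : valid_dim M n -> (2 <= n)%nat.
Proof. destruct M; simpl; intros H; try lia; destruct H; lia. Qed.

Lemma radial_solution_of_is_h M n r f : 0 < r -> is_h M n r f ->
  exists f1 f2, radial_solution (DM M n) n r f f1 f2.
Proof.
  intros Hr ((g & eps & _ & _ & Hg) & (f1 & f2 & Hd & Hode) & Hblow).
  exists f1, f2; split; auto.
  - intros u Hu; apply (Hd u Hu).
  - intros u Hu; apply (Hd u Hu).
  - intros u Hu; rewrite Hode by auto; now rewrite Rmult_1_l.
  - intros u Hu; rewrite (Hg u Hu), (Hg (- u)) by lra; f_equal; ring.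
Qed.

Lemma Kfun_solves_ode M n r h h1 h2 : (2 <= n)%nat ->
  radial_solution (DM M n) n r h h1 h2 ->
  solves_ode M n (exp (h 0 / INR n)) r (Kfun n h).
Proof.
  intros Hn Hh.
  exists (fun u => exp (- h 0 / INR n) * h1 u), (fun u => exp (- h 0 / INR n) * h2 u).
  split.
  - intros u Hu; split; [now apply (Kfun_deriv _ _ _ _ _ _ Hh)|].
    apply derivable_pt_lim_scal_fun, (sol_deriv2 Hh), Hu.
  - intros u Hu; now apply (Kfun_ode _ _ Hn _ _ _ _ Hh).
Qed.

Theorem proposition3p2 (M : model_space) (n : nat) (hM : valid_dim M n)
  (h : R -> R -> R) (hh : forall r, 0 < r -> is_h M n r (h r)) :
  (forall r, 0 < r ->
     solves_ode M n (exp (h r 0 / INR n)) r (Kfun n (h r)) /\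
     blows_up_at r (Kfun n (h r)) /\
     (forall u, 0 <= u < r -> 0 <= Kfun n (h r) u)) /\
  exists K : R -> R,
    (forall u, 0 <= u -> forall eps, 0 < eps ->
       exists d, 0 < d /\ forall v, 0 <= v -> Rabs (v - u) < d ->
         Rabs (K v - K u) < eps) /\
    (forall A eps, 0 <= A -> 0 < eps ->
       exists R0, forall r, R0 < r -> forall u, 0 <= u <= A ->
         Rabs (Kfun n (h r) u - K u) < eps).
Proof.
  pose proof (valid_dim_ge_2 M n hM) as Hn.
  assert (Hsol : forall r, 0 < r -> exists h1 h2, radial_solution (DM M n) n r (h r) h1 h2)
    by (intros r Hr; apply radial_solution_of_is_h; auto).
  split.
  - intros r Hr; destruct (Hsol r Hr) as (h1 & h2 & Hs).
    split; [now apply (Kfun_solves_ode M n r (h r) h1 h2)|].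
    split; [exact (Kfun_blowup _ _ _ _ _ _ Hs)|].
    exact (Kfun_nonneg _ _ (DM_pos M n) Hn _ _ _ _ Hs).
  - destruct (uniformly_cauchy_limit (fun r => Kfun n (h r))) as [K HK].
    { exact (Kfun_uniformly_cauchy (DM M n) n (DM_pos M n) (DM_le M n) Hn h Hsol). }
    exists K; split; [|exact HK].
    apply (uniform_limit_continuous (fun r => Kfun n (h r)) K HK).
    intros r u Hu; destruct (Hsol r ltac:(lra)) as (h1 & h2 & Hs).
    apply (Kfun_continuity_pt _ _ _ _ _ _ Hs); lra.
Qed.
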